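(* Let $S=\{p_1,\dots,p_n\}$ be a set of $n$ distinct primes and let $f_1,\dots,f_n\in\mathcal{V}$ be nonzero. Then $f_1\otimes\cdots\otimes f_n$ is an eigenfunction of $\mathbf{U}_S$ if and only if each $f_j$ is a simultaneous eigenfunction of all Hecke operators $U_q$, $q\ge2$.
   Context: For a power series $f(x)=\sum_{n\ge0}a_nx^n$ and a positive integer $q$, $U_qf(x)=\sum_{n\ge0}a_{qn}x^n$. For $k\in\mathbb{N}=\{0,1,2,\dots\}$ let $\phi_k(x)=(x\frac{d}{dx})^k\big(\frac{1}{1-x}\big)$, and let $\mathcal{V}$ be the complex span of $\phi_0,\phi_1,\dots$. Let $\mathcal{H}^n=\mathcal{V}\otimes\cdots\otimes\mathcal{V}$ ($n$ factors), where $f_1\otimes\cdots\otimes f_n$ is identified with the function $f_1(x_1)\cdots f_n(x_n)$. The operator $\mathbf{U}_S=U_{p_1}\otimes\cdots\otimes U_{p_n}$ is defined by $\mathbf{U}_S(f_1\otimes\cdots\otimes f_n)(x_1,\dots,x_n)=(U_{p_1}f_1)(x_1)\cdots(U_{p_n}f_n)(x_n)$, extended linearly; $F$ is an eigenfunction of $\mathbf{U}_S$ if $F\neq0$ and $\mathbf{U}_SF=\lambda F$ for some constant $\lambda$. *)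

From HB Require Import structures.
From mathcomp Require Import all_boot all_order all_algebra.
From mathcomp Require Import complex.
From mathcomp Require Import reals.
Set Implicit Arguments. Unset Strict Implicit. Unset Printing Implicit Defensive.
Import Order.TTheory GRing.Theory Num.Theory.
Local Open Scope ring_scope.

Section Defs.
Variable R : realType.
Local Notation C := (R[i]).

(* A one-variable power series sum_n a_n x^n is represented by its
   coefficient sequence a : nat -> C. *)
Definition series := nat -> C.

(* phi_k = (x d/dx)^k (1/(1-x)) = sum_n n^k x^n *)
Definition phi (k : nat) : series := fun m => (m%:R : C) ^+ k.

Definition inV (a : series) : Prop :=
  exists c : seq C, forall m, a m = \sum_(k < size c) c`_k * phi k m.

Definition Uop (q : nat) (a : series) : series := fun m => a (q * m)%N.

Definition eigen_U (q : nat) (a : series) : Prop :=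
  a <> (fun _ => 0) /\ exists lam : C, forall m, Uop q a m = lam * a m.

(* An n-variable power series is represented by its coefficient array
   indexed by multi-indices ('I_n -> nat). *)
Definition mseries (n : nat) := ('I_n -> nat) -> C.

(* f_1 (x) ... (x) f_n, identified with f_1(x_1)...f_n(x_n) *)
Definition tensor (n : nat) (f : 'I_n -> series) : mseries n :=
  fun m => \prod_(j < n) f j (m j).

Definition US (n : nat) (p : 'I_n -> nat) (F : mseries n) : mseries n :=
  fun m => F (fun j => (p j * m j)%N).

Definition eigen_US (n : nat) (p : 'I_n -> nat) (F : mseries n) : Prop :=
  F <> (fun _ => 0) /\ exists lam : C, forall m, US p F m = lam * F m.

End Defs.

From mathcomp Require Import all_boot all_order all_algebra.
From mathcomp Require Import complex reals.
From Stdlib Require Import Classical FunctionalExtensionality.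
Set Implicit Arguments. Unset Strict Implicit.
Unset Printing Implicit Defensive.
Import GRing.Theory Num.Theory.
Local Open Scope ring_scope.

(* Every element of V is m |-> P(m) for a complex polynomial P. If
   P(q m) = mu P(m) with q >= 2, comparing coefficients gives q^i = mu for every
   i with P_i <> 0, so P = c X^k is a monomial, which is an eigenfunction of
   every U_r (with eigenvalue r^k). For the tensor product, freezing all
   variables except x_j at a point where every other factor f_i(p_i m_i) is
   nonzero shows that f_j is an eigenfunction of U_(p_j); conversely, U_S acts
   on a product of eigenfunctions by the product of their eigenvalues. *)

Section NatEvaluation.
Variable F : numDomainType.
Implicit Types P Q : {poly F}.

Lemma poly_natr_neq0 P : P != 0 -> exists m : nat, P.[m%:R] != 0.
Proof.
move=> nzP.
suff /hasP[m _ ?] : has (fun m : nat => P.[m%:R] != 0) (iota 0 (size P)).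
  by exists m.
apply: contraT; rewrite -all_predC => /allP roots.
have := max_poly_roots nzP (rs := [seq (m%:R : F) | m <- iota 0 (size P)]).
rewrite size_map size_iota ltnn; apply.
  by apply/allP => _ /mapP[m /roots /negPn ? ->].
by rewrite map_inj_uniq ?iota_uniq // => i j /eqP; rewrite eqr_nat => /eqP.
Qed.

Lemma eq_poly_natr P Q : (forall m : nat, P.[m%:R] = Q.[m%:R]) -> P = Q.
Proof.
move=> eqPQ; apply/eqP; rewrite -subr_eq0; apply: contraT => /poly_natr_neq0[m].
by rewrite hornerD hornerN eqPQ subrr eqxx.
Qed.

Lemma comp_poly_scaleX P (c : F) :
  P \Po (c *: 'X) = \poly_(i < size P) (c ^+ i * P`_i).
Proof.
rewrite comp_polyE poly_def; apply: eq_bigr => i _.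
by rewrite exprZn scalerA mulrC.
Qed.

Lemma coef_comp_poly_scaleX P (c : F) i : (P \Po (c *: 'X))`_i = c ^+ i * P`_i.
Proof.
rewrite comp_poly_scaleX coef_poly.
by case: ltnP => // /leq_sizeP/(_ i (leqnn i)) ->; rewrite mulr0.
Qed.

Lemma comp_poly_scaleX_eq0 P (c : F) :
  c != 0 -> (P \Po (c *: 'X) == 0) = (P == 0).
Proof. by move=> nzc; rewrite comp_poly2_eq0 // size_scale ?size_polyX. Qed.

Lemma dilation_eigen_monomial P (q : nat) (mu : F) : (1 < q)%N ->
  (forall m : nat, P.[(q * m)%:R] = mu * P.[m%:R]) ->
  P = lead_coef P *: 'X^((size P).-1).
Proof.
move=> q_gt1 eigenP.
have [->|nzP] := eqVneq P 0; first by rewrite lead_coef0 scale0r.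
have /polyP eigen_coef : P \Po (q%:R *: 'X) = mu *: P.
  apply: eq_poly_natr => m.
  by rewrite horner_comp !hornerZ hornerX -natrM eigenP.
have {}eigen_coef i : (q%:R : F) ^+ i * P`_i = mu * P`_i.
  by rewrite -coef_comp_poly_scaleX eigen_coef coefZ.
have nz_lead : P`_(size P).-1 != 0 by rewrite -lead_coefE lead_coef_eq0.
apply/polyP => i; rewrite coefZ coefXn lead_coefE.
have [-> | neq_i] := eqVneq i (size P).-1; first by rewrite mulr1.
rewrite mulr0; apply: contraNeq neq_i => nz_i; apply/eqP.
have := eigen_coef i.
rewrite -(mulIf nz_lead (eigen_coef _)) => /(mulIf nz_i)/eqP.
by rewrite -!natrX eqr_nat eqn_exp2l // => /eqP.
Qed.

End NatEvaluation.

Lemma prodr_update (T : comRingType) (U : Type) n (F : 'I_n -> U -> T)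
    (m : 'I_n -> U) (j : 'I_n) (x : U) :
  \prod_(i < n) F i (if i == j then x else m i) =
  F j x * \prod_(i < n | i != j) F i (m i).
Proof.
rewrite (bigD1 j) //= eqxx; congr (_ * _).
by apply: eq_bigr => i /negPf ->.
Qed.

Section Series.
Variable R : realType.
Local Notation C := (R[i]).
Implicit Types (a : series R) (q : nat).

Lemma exists_nonzero_coef a : a <> (fun _ => 0) -> exists m, a m != 0.
Proof.
move=> nz_a; apply: NNPP => all0; apply: nz_a.
apply: functional_extensionality => m.
by apply/eqP; apply: contraT => nz_am; case: all0; exists m.
Qed.

Lemma inV_poly a : inV a -> exists P : {poly C}, forall m, a m = P.[m%:R].
Proof.
case=> c def_a; exists (\sum_(k < size c) c`_k *: 'X^k) => m.
by rewrite def_a horner_sum; apply: eq_bigr => k _; rewrite hornerZ hornerXn.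
Qed.

Lemma inV_Uop_neq0 a q : inV a -> a <> (fun _ => 0) -> (0 < q)%N ->
  exists m, Uop q a m != 0.
Proof.
move=> /inV_poly[P def_a] nz_a q_gt0.
have nzP : P != 0.
  apply/eqP => P0; apply: nz_a; apply: functional_extensionality => m.
  by rewrite def_a P0 horner0.
have nz_dilP : P \Po (q%:R *: 'X) != 0.
  by rewrite comp_poly_scaleX_eq0 // pnatr_eq0 -lt0n.
have [m] := poly_natr_neq0 nz_dilP.
by rewrite horner_comp !hornerE -natrM -def_a; exists m.
Qed.

Lemma inV_eigen_U_all a q : inV a -> (1 < q)%N -> eigen_U q a ->
  forall r, eigen_U r a.
Proof.
move=> /inV_poly[P def_a] q_gt1 [nz_a [mu eigen_a]] r; split=> //.
pose k := (size P).-1; have monoP : P = lead_coef P *: 'X^k.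
  apply: (dilation_eigen_monomial q_gt1 (mu := mu)) => m.
  by rewrite -!def_a; apply: eigen_a.
exists ((r%:R : C) ^+ k) => m.
by rewrite /Uop !def_a monoP !hornerZ !hornerXn natrM exprMn mulrCA.
Qed.

Lemma eigen_US_tensor n (p : 'I_n -> nat) (f : 'I_n -> series R) :
  (forall i, eigen_U (p i) (f i)) -> eigen_US p (tensor f).
Proof.
move=> eigen_f; have [mu eigen_mu] := fin_all_exists (fun i => (eigen_f i).2).
have [m nz_m] := fin_all_exists (fun i => exists_nonzero_coef (eigen_f i).1).
split.
  move/(congr1 (fun F => F m))/eqP; apply/negP.
  by apply/prodf_neq0 => i _; apply: nz_m.
exists (\prod_(i < n) mu i) => x.
by rewrite /US /tensor -big_split; apply: eq_bigr => i _; apply: eigen_mu.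
Qed.

Lemma eigen_US_tensor_factor n (p : 'I_n -> nat) (f : 'I_n -> series R)
    (m : 'I_n -> nat) :
  (forall i, Uop (p i) (f i) (m i) != 0) -> eigen_US p (tensor f) ->
  forall j, exists mu, forall x, Uop (p j) (f j) x = mu * f j x.
Proof.
move=> nz_m [_ [lam eigen_lam]] j.
pose A := \prod_(i < n | i != j) f i (p i * m i)%N.
pose B := \prod_(i < n | i != j) f i (m i).
have nzA : A != 0 by apply/prodf_neq0 => i _; apply: nz_m.
exists (lam * B / A) => x.
have := eigen_lam (fun i => if i == j then x else m i).
rewrite /US /tensor (prodr_update (fun i y => f i (p i * y)%N)).
rewrite prodr_update -/A -/B.
rewrite /Uop => eq_at_x.
by rewrite -[LHS](mulfK nzA) eq_at_x mulrA [lam * _ * B]mulrAC [LHS]mulrAC.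
Qed.

End Series.

Theorem mainTheorem17 (R : realType) (n : nat) (p : 'I_n -> nat)
  (f : 'I_n -> series R) :
  injective p -> (forall j, prime (p j)) ->
  (forall j, inV (f j)) -> (forall j, f j <> (fun _ => 0)) ->
  (eigen_US p (tensor f) <->
   (forall j, forall q : nat, (2 <= q)%N -> eigen_U q (f j))).
Proof.
move=> _ p_prime f_V nz_f.
have p_gt1 j : (1 < p j)%N by apply: prime_gt1.
split=> [eigen_f j q _ | eigen_f].
  have [m nz_m] := fin_all_exists (fun i =>
    inV_Uop_neq0 (f_V i) (nz_f i) (ltnW (p_gt1 i))).
  apply: (inV_eigen_U_all (f_V j) (p_gt1 j)); split; first exact: nz_f.
  exact: eigen_US_tensor_factor nz_m eigen_f j.
by apply: eigen_US_tensor => i; apply: eigen_f.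
Qed.
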